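(* Let $\mathcal G=(\mathcal V,\mathcal E)$ be a strongly connected directed graph on $\mathcal V=\{1,\dots,n\}$, let $\mathcal D$ be an upper bound on its diameter, and let $\mathcal P=[p_{ij}]$ be a primitive column-stochastic weighted adjacency matrix of $\mathcal G$. Let $\varepsilon>0$ and let $u_i^0\in\mathbb R^p$, $i\in\mathcal V$, be arbitrary initial vectors. If all agents execute the finite-time $\varepsilon$-consensus protocol described in the context, then for every agent $i\in\mathcal V$ the protocol terminates after finitely many iterations, i.e. there is a finite $m$ with $\widehat R_i^{m-1}<\varepsilon$.
   Context: Conventions: $(i,j)\in\mathcal E$ denotes a directed edge from $j$ to $i$; the in-neighborhood of $i$ is $\mathcal N_i^-=\{j\neq i:(i,j)\in\mathcal E\}$. The graph is strongly connected: for every ordered pair of distinct nodes there is a directed path between them. $\mathcal P$ is column-stochastic ($p_{ij}\ge 0$, $\sum_{i}p_{ij}=1$ for every $j$), primitive (irreducible with a unique eigenvalue of maximum modulus), and a weighted adjacency matrix of $\mathcal G$ ($p_{ij}=0$ unless $j=i$ or $j\in\mathcal N_i^-$). The diameter of $\mathcal G$ is the longest shortest directed path length between two nodes. Norms are Euclidean. Finite-time $\varepsilon$-consensus protocol: each agent $i$ sets $w_i^0=u_i^0$, $v_i^0=1$, $R_i^0=0$, $m=1$, and for $t=0,1,2,\dots$ computes $u_i^{t+1}=p_{ii}u_i^t+\sum_{j\in\mathcal N_i^-}p_{ij}u_j^t$, $v_i^{t+1}=p_{ii}v_i^t+\sum_{j\in\mathcal N_i^-}p_{ij}v_j^t$,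 $w_i^{t+1}=u_i^{t+1}/v_i^{t+1}$, and $R_i^{t+1}=\max_{j\in\mathcal N_i^-}\{\|w_i^{t+1}-w_j^{t}\|+R_j^{t}\}$. Whenever $t=m\mathcal D-1$, agent $i$ sets $\widehat R_i^{m-1}=R_i^{t+1}$; if $\widehat R_i^{m-1}<\varepsilon$ it terminates (declares $\varepsilon$-consensus), otherwise it resets $R_i^{t+1}=0$ and sets $m\leftarrow m+1$. *)

From HB Require Import structures.
From mathcomp Require Import all_boot all_order all_algebra.
From mathcomp Require Import reals.
From mathcomp Require Import complex.
Set Implicit Arguments. Unset Strict Implicit. Unset Printing Implicit Defensive.
Import Order.TTheory GRing.Theory Num.Theory.
Local Open Scope ring_scope.

Section Defs.
Variable n : nat.

(* Convention: [E i j] means (i,j) is an edge, i.e. a directed edge FROM j TO i. *)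
Definition step (E : rel 'I_n) : rel 'I_n := fun a b => E b a.

Definition Nin (E : rel 'I_n) (i : 'I_n) : {set 'I_n} :=
  [set j | (j != i) && E i j].

Definition dipath (E : rel 'I_n) (j i : 'I_n) (s : seq 'I_n) : Prop :=
  path (step E) j s /\ last j s = i.

Definition strongly_connected (E : rel 'I_n) : Prop :=
  forall i j : 'I_n, i != j -> exists s, dipath E j i s.

Definition diameter_le (E : rel 'I_n) (D : nat) : Prop :=
  forall i j : 'I_n, exists s, dipath E j i s /\ (size s <= D)%N.

Definition column_stochastic {R : realType} (P : 'M[R]_n) : Prop :=
  (forall i j, 0 <= P i j) /\ (forall j, \sum_i P i j = 1).

Definition weighted_adjacency {R : realType} (E : rel 'I_n) (P : 'M[R]_n) : Prop :=
  forall i j, j != i -> j \notin Nin E i -> P i j = 0.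

(* irreducible: not reducible, i.e. no simultaneous permutation of rows and
   columns brings P to block upper-triangular form; equivalently there is no
   nonempty proper index set S with P i j = 0 whenever i \notin S, j \in S. *)
Definition irreducible_mx {R : realType} (P : 'M[R]_n) : Prop :=
  ~ exists S : {set 'I_n}, [/\ S != set0, S != setT &
        forall i j, i \notin S -> j \in S -> P i j = 0].

Definition eigenvalue_C {R : realType} (P : 'M[R]_n) (l : R[i]) : Prop :=
  root (char_poly (map_mx (fun x : R => x%:C%C) P)) l.

Definition primitive_mx {R : realType} (P : 'M[R]_n) : Prop :=
  irreducible_mx P /\
  exists l0 : R[i], eigenvalue_C P l0 /\
    forall l, eigenvalue_C P l -> l != l0 -> `|l| < `|l0|.

Definition enorm {R : realType} {p : nat} (x : 'rV[R]_p) : R :=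
  Num.sqrt (\sum_k x 0 k ^+ 2).

Section Protocol.
Variables (R : realType) (p : nat) (E : rel 'I_n) (P : 'M[R]_n) (D : nat)
          (u0 : 'I_n -> 'rV[R]_p).

Fixpoint u_seq (t : nat) : 'I_n -> 'rV[R]_p :=
  match t with
  | 0 => u0
  | t'.+1 => fun i => P i i *: u_seq t' i + \sum_(j in Nin E i) P i j *: u_seq t' j
  end.

Fixpoint v_seq (t : nat) : 'I_n -> R :=
  match t with
  | 0 => fun _ => 1
  | t'.+1 => fun i => P i i * v_seq t' i + \sum_(j in Nin E i) P i j * v_seq t' j
  end.

Definition w_seq (t : nat) (i : 'I_n) : 'rV[R]_p := (v_seq t i)^-1 *: u_seq t i.

(* R_seq t i = value of R_i^t as computed by the update rule, BEFORE any reset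
   performed at time t.  R_i^0 = 0; at times t = m D (m >= 1) the agent records
   \hat R_i^{m-1} = R_i^{mD} and then resets R_i^{mD} to 0, so the value used
   by the next update is 0 whenever D divides t. *)
Fixpoint R_seq (t : nat) : 'I_n -> R :=
  match t with
  | 0 => fun _ => 0
  | t'.+1 => fun i =>
      \big[Num.max/0]_(j in Nin E i)
         (enorm (w_seq t'.+1 i - w_seq t' j) + (if (D %| t')%N then 0 else R_seq t' j))
  end.

(* \hat R_i^{m-1} = R_i^{mD} (before reset) *)
Definition Rhat (m : nat) (i : 'I_n) : R := R_seq ((m.+1) * D) i.

End Protocol.
End Defs.

From mathcomp Require Import all_boot all_order all_algebra.
From mathcomp Require Import reals complex.
From mathcomp Require Import ring lra zify.
From mathcomp Require Import topology normedtype sequences.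
Set Implicit Arguments. Unset Strict Implicit. Unset Printing Implicit Defensive.
Import Order.TTheory GRing.Theory Num.Theory numFieldNormedType.Exports.
Local Open Scope ring_scope.

(* Coordinatewise, the protocol iterates P: the k-th coordinates of the u_i^t
   form P^t x_k, where x_k collects the k-th coordinates of the u_i^0, and the
   v_i^t form P^t 1.  Column-stochasticity makes P non-expansive for the l1-norm,
   so every eigenvalue has modulus at most 1; 1 is an eigenvalue (with left
   eigenvector 1), and by primitivity it is the only one on the unit circle.
   Split C^n along char P = q (X - 1)^a: the boundedness of the powers forces P
   to be the identity on the kernel of (P - 1)^a, while on the kernel of q(P) the
   powers decay geometrically.  Hence P^t x converges to a fixed vector of P.  By
   irreducibility the fixed vectors are multiples of a positive one, so the
   ratios w_i^t converge to a limit c independent of i, the increments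
   ||w_i^(t+1) - w_j^t|| become uniformly small, and between two resets R_i
   accumulates at most D of them. *)

Lemma fixed_mulmx_exp (R : pzRingType) (m k : nat) (M : 'M[R]_m) (X : 'M[R]_(m, k)) t :
  M *m X = X -> M ^+ t *m X = X.
Proof.
move=> MX; elim: t => [|t IH]; first by rewrite expr0 mul1mx.
by rewrite exprSr -mulmxA MX IH.
Qed.

Lemma char_poly_trmx (R : comNzRingType) (m : nat) (M : 'M[R]_m) :
  char_poly M^T = char_poly M.
Proof.
rewrite /char_poly -det_tr; congr (determinant _); rewrite /char_poly_mx.
by rewrite linearB /= tr_scalar_mx map_trmx trmxK.
Qed.

Lemma horner_mx_XsubC (R : comNzRingType) (n' : nat) (M : 'M[R]_n'.+1) z :
  horner_mx M ('X - z%:P) = M - z%:M.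
Proof. by rewrite rmorphB /= horner_mx_X horner_mx_C. Qed.

Section ComplexL1Norm.
Variable R : rcfType.
Local Notation C := R[i].
Local Notation normc := (@Normc.normc R).

Lemma normc_ge0 (z : C) : 0 <= normc z.
Proof. by case: z => a b; rewrite /= sqrtr_ge0. Qed.

Lemma normc_real (x : R) : normc x%:C%C = `|x|.
Proof. by rewrite /= expr0n /= addr0 sqrtr_sqr. Qed.

Lemma Re_le_normc (z : C) : `|complex.Re z| <= normc z.
Proof.
case: z => a b /=; rewrite -sqrtr_sqr.
by rewrite ler_sqrt ?addr_ge0 ?sqr_ge0 // lerDl sqr_ge0.
Qed.

Lemma Re_realB (x : R) (z : C) : complex.Re (x%:C%C - z) = x - complex.Re z.
Proof. by case: z. Qed.

Lemma Re_realM (x : R) (z : C) : complex.Re (x%:C%C * z) = x * complex.Re z.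
Proof. by case: z => a b /=; rewrite mul0r subr0. Qed.

Lemma normC_normc (z : C) : `|z| = (normc z)%:C%C.
Proof. by case: z => a b; rewrite normc_def. Qed.

Lemma normc_sum_le (I : Type) (r : seq I) (P : pred I) (F : I -> C) :
  normc (\sum_(i <- r | P i) F i) <= \sum_(i <- r | P i) normc (F i).
Proof.
elim/big_rec2: _ => [|i y1 y2 _ H]; first by rewrite Normc.normc0.
by apply: (le_trans (le_normcD _ _)); rewrite lerD2l.
Qed.

Definition norm1 (m : nat) (x : 'cV[C]_m) : R := \sum_i normc (x i 0).

Variable m : nat.
Implicit Types x y : 'cV[C]_m.

Lemma norm1_ge0 x : 0 <= norm1 x.
Proof. by apply: sumr_ge0 => i _; apply: normc_ge0. Qed.

Lemma norm1D x y : norm1 (x + y) <= norm1 x + norm1 y.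
Proof. by rewrite /norm1 -big_split; apply: ler_sum => i _; rewrite mxE le_normcD. Qed.

Lemma norm1Z (l : C) x : norm1 (l *: x) = normc l * norm1 x.
Proof. by rewrite /norm1 mulr_sumr; apply: eq_bigr => i _; rewrite mxE Normc.normcM. Qed.

Lemma norm1N x : norm1 (- x) = norm1 x.
Proof. by apply: eq_bigr => i _; rewrite mxE normcN. Qed.

Lemma norm1Mn x k : norm1 (x *+ k) = norm1 x *+ k.
Proof. by rewrite /norm1 -sumrMnl; apply: eq_bigr => i _; rewrite mulmxnE normcMn. Qed.

Lemma norm10 : norm1 (0 : 'cV[C]_m) = 0.
Proof. by rewrite /norm1 big1 // => i _; rewrite mxE Normc.normc0. Qed.

Lemma norm1_eq0 x : norm1 x = 0 -> x = 0.
Proof.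
move=> /eqP; rewrite psumr_eq0 => [/allP x0|i _]; last exact: normc_ge0.
apply/matrixP => i j; rewrite ord1 mxE; apply: Normc.eq0_normc.
exact/eqP/(implyP (x0 i (mem_index_enum _))).
Qed.

Lemma normc_le_norm1 x i : normc (x i 0) <= norm1 x.
Proof. by rewrite /norm1 (bigD1 i) //= lerDl; apply: sumr_ge0 => j _; exact: normc_ge0. Qed.

End ComplexL1Norm.

Section AffineRecursion.
Variable R : realType.
Local Open Scope classical_set_scope.

Lemma cvg0_affine_rec (r : R) (a b : nat -> R) : 0 <= r < 1 ->
  (forall t, 0 <= a t) -> (forall t, a t.+1 <= r * a t + b t) ->
  b t @[t --> \oo] --> 0 -> a t @[t --> \oo] --> 0.
Proof.
move=> /andP[r0 r1] a0 a_rec /cvgr0Pnorm_lt b0; apply/cvgr0Pnorm_lt => e e0.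
have e'0 : 0 < e * (1 - r) / 2 by rewrite divr_gt0 // mulr_gt0 // subr_gt0.
have [N _ bN] := b0 _ e'0.
have aN k : a (N + k)%N <= r ^+ k * a N + e / 2.
  elim: k => [|k IH]; first by rewrite addn0 expr0 mul1r lerDl divr_ge0 // ltW.
  rewrite addnS; apply: (le_trans (a_rec _)).
  have /ltr_normlW := bN (N + k)%N (leq_addr _ _).
  have := ler_wpM2l r0 IH; rewrite exprS -mulrA; lra.
have r_cvg : r ^+ k * a N @[k --> \oo] --> 0.
  rewrite -(mul0r (a N)); apply: cvgM; last exact: cvg_cst.
  by apply: cvg_expr; rewrite ger0_norm.
have [M _ rM] := cvgr0_norm_lt _ r_cvg (e / 2) (divr_gt0 e0 (ltr0Sn _ 1)).
exists (N + M)%N => // t /= NMt; rewrite ger0_norm //.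
rewrite -(subnKC (leq_trans (leq_addr M N) NMt)); apply: (le_lt_trans (aN _)).
have /ltr_normlW : `|r ^+ (t - N) * a N| < e / 2 by apply: rM => /=; lia.
lra.
Qed.

End AffineRecursion.

Section PowerDecay.
Variables (R : realType) (n' : nat).
Local Notation C := R[i].
Local Notation normc := (@Normc.normc R).
Variable M : 'M[C]_n'.+1.
Local Open Scope classical_set_scope.

Lemma cvg0_pow_mul_annihilated (s : seq C) (X : 'cV[C]_n'.+1) :
  (forall z, z \in s -> normc z < 1) ->
  horner_mx M (\prod_(z <- s) ('X - z%:P)) *m X = 0 ->
  norm1 (M ^+ t *m X) @[t --> \oo] --> 0.
Proof.
elim: s X => [|z s IH] X s_lt1.
  rewrite big_nil rmorph1 mul1mx => ->.
  by under eq_cvg do rewrite mulmx0 norm10; exact: cvg_cst.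
rewrite big_cons mulrC rmorphM /= horner_mx_XsubC -mulmxA => /IH Y_cvg.
have z_lt1 : 0 <= normc z < 1 by rewrite normc_ge0 s_lt1 ?mem_head.
apply: (cvg0_affine_rec z_lt1) (Y_cvg _) => [t|t|w ws]; last exact/s_lt1/mem_behead.
  exact: norm1_ge0.
have -> : M ^+ t.+1 *m X = z *: (M ^+ t *m X) + M ^+ t *m ((M - z%:M) *m X).
  by rewrite exprSr -mulmxA mulmxBl mul_scalar_mx mulmxBr scalemxAr addrC subrK.
by rewrite -norm1Z; apply: norm1D.
Qed.

Lemma cvg0_pow_mul_poly (q : {poly C}) (X : 'cV[C]_n'.+1) : q != 0 ->
  (forall z, root q z -> normc z < 1) -> horner_mx M q *m X = 0 ->
  norm1 (M ^+ t *m X) @[t --> \oo] --> 0.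
Proof.
move=> q_neq0 q_roots; have [s qE] := closed_field_poly_normal q.
have lc_neq0 : lead_coef q != 0 by rewrite lead_coef_eq0.
rewrite {1}qE linearZ /= -scalemxAl => /eqP; rewrite scaler_eq0 (negbTE lc_neq0) /=.
move=> /eqP; apply: cvg0_pow_mul_annihilated => z zs; apply: q_roots.
by rewrite qE rootZ // root_prod_XsubC.
Qed.

End PowerDecay.

Section StochasticPowers.
Variables (R : realType) (n' : nat) (P : 'M[R]_n'.+1).
Hypothesis P_stoch : column_stochastic P.
Local Open Scope classical_set_scope.
Local Notation C := R[i].
Local Notation normc := (@Normc.normc R).
Local Notation A := (map_mx (fun a => a%:C%C) P).

Lemma norm1_stochastic_mul (X : 'cV[C]_n'.+1) : norm1 (A *m X) <= norm1 X.
Proof.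
have [P_ge0 P_sum1] := P_stoch; rewrite /norm1.
apply: (le_trans (y := \sum_i \sum_j P i j * normc (X j 0))).
  apply: ler_sum => i _; rewrite mxE; apply: (le_trans (normc_sum_le _ _ _)).
  by apply: ler_sum => j _; rewrite mxE Normc.normcM normc_real ger0_norm.
by rewrite exchange_big; apply: ler_sum => j _; rewrite -mulr_suml P_sum1 mul1r.
Qed.

Lemma norm1_pow_mul (X : 'cV[C]_n'.+1) t : norm1 (A ^+ t *m X) <= norm1 X.
Proof.
elim: t => [|t IH]; first by rewrite expr0 mul1mx.
by rewrite exprS -mulmxA; apply: le_trans (norm1_stochastic_mul _) IH.
Qed.

Lemma sub1_mul_eq0 (Z : 'cV[C]_n'.+1) :
  (A - 1) ^+ 2 *m Z = 0 -> (A - 1) *m Z = 0.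
Proof.
rewrite expr2 -mulmxA; set W := (A - 1) *m Z => W_ker.
have AW : A *m W = W by apply/eqP; rewrite -subr_eq0 -W_ker mulmxBl mul1mx.
have AZ : A *m Z = Z + W by rewrite /W mulmxBl mul1mx addrC subrK.
have AkZ k : A ^+ k *m Z = Z + W *+ k.
  elim: k => [|k IH]; first by rewrite expr0 mul1mx addr0.
  by rewrite exprS -mulmxA IH mulmxDr AZ raddfMn /= AW mulrS addrA.
have W_bounded k : norm1 W *+ k <= norm1 Z *+ 2.
  have -> : norm1 W *+ k = norm1 (A ^+ k *m Z - Z) by rewrite AkZ addrC addKr norm1Mn.
  by apply: (le_trans (norm1D _ _)); rewrite norm1N mulr2n lerD2r norm1_pow_mul.
apply: norm1_eq0; apply/eqP; rewrite eq_le norm1_ge0 andbT leNgt; apply/negP => W_gt0.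
have bound_ge0 : 0 <= norm1 Z *+ 2 / norm1 W by rewrite divr_ge0 ?mulrn_wge0 ?norm1_ge0.
have := archi_boundP bound_ge0; rewrite ltr_pdivrMr // mulr_natl => lt_bound.
by have := lt_le_trans lt_bound (W_bounded _); rewrite ltxx.
Qed.

Lemma fixed_of_sub1_exp_mul (k : nat) (X : 'cV[C]_n'.+1) :
  (A - 1) ^+ k *m X = 0 -> A *m X = X.
Proof.
elim: k X => [|[|k] IH] X.
- by rewrite expr0 mul1mx => ->; rewrite mulmx0.
- by rewrite expr1 mulmxBl mul1mx => /eqP; rewrite subr_eq0 => /eqP.
- move=> X_ker; apply: IH; rewrite exprS -mulmxE -mulmxA; apply: sub1_mul_eq0.
  by rewrite mulmxA mulmxE -exprD add2n.
Qed.

Lemma normc_eigenvalue_le1 (l : C) : root (char_poly A) l -> normc l <= 1.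
Proof.
rewrite -char_poly_trmx -eigenvalue_root_char => /eigenvalueP [v vA v_neq0].
have Av : A *m v^T = l *: v^T by rewrite -[A]trmxK -trmx_mul vA linearZ.
have v_gt0 : 0 < norm1 v^T.
  rewrite lt_def norm1_ge0 andbT; apply/eqP => /norm1_eq0 /eqP.
  by rewrite -trmx0 (inj_eq trmx_inj) (negbTE v_neq0).
have := norm1_stochastic_mul v^T; rewrite Av norm1Z.
by rewrite -[X in _ <= X]mul1r ler_pM2r.
Qed.

Lemma root_char_poly1 : root (char_poly A) 1.
Proof.
rewrite -eigenvalue_root_char; apply/eigenvalueP; exists (const_mx 1).
  apply/matrixP => i j; rewrite !mxE.
  under eq_bigr do rewrite !mxE mul1r.
  by rewrite -rmorph_sum /= P_stoch.2 mulr1.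
by apply/eqP => /matrixP /(_ 0 0); rewrite !mxE; apply/eqP; rewrite oner_eq0.
Qed.

Lemma normc_eigenvalue_lt1 : primitive_mx P ->
  forall l, root (char_poly A) l -> l != 1 -> normc l < 1.
Proof.
have ltE (a b : C) : (`|a| < `|b|) = (normc a < normc b) by rewrite !normC_normc ltcR.
case=> _ [l0 [l0_root l0_dom]].
have l0_eq1 : l0 = 1.
  apply/eqP; apply: contraT => l0_neq1.
  have := l0_dom 1 root_char_poly1; rewrite eq_sym ltE Normc.normc1 => /(_ l0_neq1).
  by rewrite ltNge normc_eigenvalue_le1.
by move=> l l_root l_neq1; rewrite -(Normc.normc1 R) -ltE -l0_eq1 l0_dom // l0_eq1.
Qed.

Lemma pow_mul_cvg_fixed : primitive_mx P -> forall X : 'cV[C]_n'.+1,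
  exists2 X1, A *m X1 = X1 & norm1 (A ^+ t *m X - X1) @[t --> \oo] --> 0.
Proof.
move=> P_prim X; set chi := char_poly A.
have chi_neq0 : chi != 0 by rewrite monic_neq0 ?char_poly_monic.
have [a [q q1 chiE]] := multiplicity_XsubC chi 1; rewrite chi_neq0 /= in q1.
have q_neq0 : q != 0 by apply: contraNneq chi_neq0 => q0; rewrite chiE q0 mul0r.
have /Bezout_eq1_coprimepP [[u1 u2] /= bezout] : coprimep q (('X - 1%:P) ^+ a).
  by apply: coprimep_expr; rewrite coprimep_XsubC.
have chi_mul0 (p : {poly C}) Y : horner_mx A (p * chi) *m Y = 0.
  by rewrite rmorphM /= Cayley_Hamilton mulr0 mul0mx.
set X1 := horner_mx A (u1 * q) *m X; set X2 := horner_mx A (u2 * ('X - 1%:P) ^+ a) *m X.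
have XE : X = X1 + X2 by rewrite -mulmxDl -rmorphD bezout rmorph1 mul1mx.
have AX1 : A *m X1 = X1.
  apply: (@fixed_of_sub1_exp_mul a).
  have -> : (A - 1) ^+ a = horner_mx A (('X - 1%:P) ^+ a).
    by rewrite rmorphXn /= horner_mx_XsubC.
  by rewrite /X1 mulmxA mulmxE -rmorphM /= mulrCA [_ * q]mulrC -chiE chi_mul0.
exists X1 => //.
have AtX t : A ^+ t *m X - X1 = A ^+ t *m X2.
  by rewrite {1}XE mulmxDr fixed_mulmx_exp // addrC addKr.
under eq_cvg do rewrite AtX.
apply: (cvg0_pow_mul_poly q_neq0).
  move=> z qz; apply: (normc_eigenvalue_lt1 P_prim).
    by rewrite -/chi chiE rootM qz.
  by apply: contraNneq q1 => <-.
by rewrite /X2 mulmxA mulmxE -rmorphM /= mulrCA -chiE chi_mul0.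
Qed.

Lemma pow_mul_cvg_fixed_real : primitive_mx P -> forall x : 'cV[R]_n'.+1,
  exists2 l : 'cV[R]_n'.+1, P *m l = l & forall i, (P ^+ t *m x) i 0 @[t --> \oo] --> l i 0.
Proof.
move=> P_prim x; pose toC := map_mx (fun a : R => a%:C%C).
have [X1 AX1 X1_cvg] := pow_mul_cvg_fixed P_prim (toC _ _ x).
exists (map_mx (@complex.Re R) X1).
  apply/matrixP => i j; rewrite ord1 mxE -[in RHS]AX1 !mxE.
  rewrite (raddf_sum (@complex.Re R : Rcomplex R -> R)).
  by apply: eq_bigr => k _; rewrite !mxE /= Re_realM.
move=> i; apply/cvgrPdist_lt => e e_gt0.
apply: filterS (cvgr0_norm_lt _ X1_cvg e e_gt0) => t /=.
rewrite ger0_norm ?norm1_ge0 //; apply: le_lt_trans; apply: le_trans (normc_le_norm1 _ i).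
by rewrite -rmorphXn -map_mxM !mxE distrC -Re_realB Re_le_normc.
Qed.

End StochasticPowers.

Section IrreducibleNonneg.
Variables (R : realType) (n : nat) (P : 'M[R]_n).
Hypotheses (P_ge0 : forall i j, 0 <= P i j) (P_irr : irreducible_mx P).

Lemma irreducible_invariant_setT (S : {set 'I_n}) k : k \in S ->
  (forall i j, i \notin S -> j \in S -> P i j = 0) -> S = [set: 'I_n].
Proof.
move=> Sk S_inv; apply/eqP/negPn/negP => S_neqT; apply: P_irr.
by exists S; split=> //; apply/set0Pn; exists k.
Qed.

Lemma fixed_mulmx_entry (m : 'cV[R]_n) a : P *m m = m -> m a 0 = \sum_k P a k * m k 0.
Proof. by move=> Pm; rewrite -[in LHS]Pm mxE. Qed.

Lemma irreducible_fixed_gt0 (m : 'cV[R]_n) : P *m m = m ->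
  (forall i, 0 <= m i 0) -> (exists i, 0 < m i 0) -> forall i, 0 < m i 0.
Proof.
move=> Pm m_ge0 [k mk_gt0] i.
have /setP/(_ i) : [set j | 0 < m j 0] = [set: 'I_n].
  apply: (@irreducible_invariant_setT _ k); first by rewrite inE.
  move=> a b; rewrite !inE -leNgt => ma_le0 mb_gt0.
  have ma0 : \sum_k P a k * m k 0 = 0.
    by rewrite -fixed_mulmx_entry //; apply/eqP; rewrite eq_le ma_le0 m_ge0.
  have /eqP := @psumr_eq0P _ _ _ _ (fun k _ => mulr_ge0 (P_ge0 a k) (m_ge0 k)) ma0 b isT.
  by rewrite mulf_eq0 (gt_eqF mb_gt0) orbF => /eqP.
by rewrite !inE.
Qed.

Lemma irreducible_fixed_ratio_const (l m : 'cV[R]_n) :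
  P *m l = l -> P *m m = m -> (forall i, 0 < m i 0) ->
  forall i j, l i 0 / m i 0 = l j 0 / m j 0.
Proof.
move=> Pl Pm m_gt0 i; pose z k := l k 0 / m k 0.
have [i0 _ z_le] := @arg_maxP _ _ _ i xpredT z isT; set M := z _ in z_le.
suff z_max k : z k = M by move=> j; rewrite -/(z i) -/(z j) !z_max.
apply/eqP; apply: contraT => zk_neqM.
have /setP/(_ i0) : [set k | z k != M] = [set: 'I_n].
  apply: (@irreducible_invariant_setT _ k); first by rewrite inE.
  move=> a b; rewrite !inE negbK => /eqP za zb.
  have lE c : l c 0 = z c * m c 0 by rewrite /z divfK ?gt_eqF.
  have terms0 : \sum_c P a c * m c 0 * (M - z c) = 0.
    under eq_bigr => c _ do rewrite mulrBr -(mulrA _ _ (z c)) [m c 0 * z c]mulrC -lE.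
    by rewrite sumrB -mulr_suml -!fixed_mulmx_entry // lE za mulrC subrr.
  have terms_ge0 c : 0 <= P a c * m c 0 * (M - z c).
    by rewrite !mulr_ge0 ?subr_ge0 ?P_ge0 ?(ltW (m_gt0 c)) //; exact: z_le.
  have /eqP := @psumr_eq0P _ _ _ _ (fun c _ => terms_ge0 c) terms0 b isT.
  by rewrite !mulf_eq0 subr_eq0 [M == _]eq_sym (negbTE zb) (gt_eqF (m_gt0 b)) !orbF => /eqP.
by rewrite !inE eqxx.
Qed.

End IrreducibleNonneg.

Lemma enorm_le_sum (R : realType) (p : nat) (x : 'rV[R]_p) : enorm x <= \sum_k `|x 0 k|.
Proof.
rewrite /enorm -[X in _ <= X]ger0_norm ?sumr_ge0 // -sqrtr_sqr.
rewrite ler_sqrt ?sqr_ge0 // expr2 mulr_suml.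
apply: ler_sum => k _; rewrite -real_normK ?num_real // expr2 ler_wpM2l //.
by rewrite (bigD1 k) //= lerDl sumr_ge0.
Qed.

Lemma pow_mul_ge0 (R : numDomainType) (n : nat) (P : 'M[R]_n) (x : 'cV[R]_n) t :
  (forall i j, 0 <= P i j) -> (forall i, 0 <= x i 0) -> forall i, 0 <= (P ^+ t *m x) i 0.
Proof.
move=> P_ge0 x_ge0; elim: t => [|t IH] i; first by rewrite expr0 mul1mx.
by rewrite exprS -mulmxA mxE; apply: sumr_ge0 => j _; rewrite mulr_ge0.
Qed.

Lemma sum_pow_mul (R : realType) (n : nat) (P : 'M[R]_n) (x : 'cV[R]_n) t :
  column_stochastic P -> \sum_i (P ^+ t *m x) i 0 = \sum_i x i 0.
Proof.
move=> [_ P_sum1]; elim: t => [|t IH]; first by rewrite expr0 mul1mx.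
rewrite exprS -mulmxA -IH; under eq_bigr do rewrite mxE.
by rewrite exchange_big; apply: eq_bigr => j _; rewrite -mulr_suml P_sum1 mul1r.
Qed.

Section Protocol.
Variables (R : realType) (n p : nat) (E : rel 'I_n) (P : 'M[R]_n) (D : nat).
Variable u0 : 'I_n -> 'rV[R]_p.
Hypothesis P_adj : weighted_adjacency E P.

Lemma sum_weighted_adjacency (f : 'I_n -> R) i :
  \sum_j P i j * f j = P i i * f i + \sum_(j in Nin E i) P i j * f j.
Proof.
rewrite (bigD1 i) //=; congr (_ + _).
rewrite (bigID (mem (Nin E i))) /= [X in _ + X]big1 ?addr0.
  by apply: eq_bigl => j; rewrite andb_idl // inE => /andP[].
by move=> j /andP[ji jNi]; rewrite P_adj ?mul0r.
Qed.

Lemma u_seqE t i k : u_seq E P u0 t i 0 k = (P ^+ t *m \col_j u0 j 0 k) i 0.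
Proof.
elim: t i => [|t IH] i; first by rewrite expr0 mul1mx mxE.
rewrite exprS -mulmxA [RHS]mxE sum_weighted_adjacency /= mxE.
congr (_ + _); first by rewrite mxE IH.
by rewrite summxE; apply: eq_bigr => j _; rewrite mxE IH.
Qed.

Lemma v_seqE t i : v_seq E P t i = (P ^+ t *m (const_mx 1 : 'cV_n)) i 0.
Proof.
elim: t i => [|t IH] i; first by rewrite expr0 mul1mx mxE.
rewrite exprS -mulmxA [RHS]mxE sum_weighted_adjacency /=.
by congr (_ + _); [rewrite IH | apply: eq_bigr => j _; rewrite IH].
Qed.

Lemma w_seqE t i k :
  w_seq E P u0 t i 0 k = (P ^+ t *m \col_j u0 j 0 k) i 0 / (P ^+ t *m (const_mx 1 : 'cV_n)) i 0.
Proof. by rewrite /w_seq mxE u_seqE v_seqE mulrC. Qed.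

Lemma Rhat_le (eta : R) N m i : (0 < D)%N -> 0 <= eta -> (N <= m * D)%N ->
  (forall s, (N <= s)%N -> forall a b,
     enorm (w_seq E P u0 s.+1 a - w_seq E P u0 s b) <= eta) ->
  Rhat E P D u0 m i <= D%:R * eta.
Proof.
move=> D_gt0 eta_ge0 NmD w_step.
have R_le k : (k < D)%N -> forall j, R_seq E P D u0 (m * D + k.+1) j <= k.+1%:R * eta.
  elim: k => [|k IH] kD j.
    rewrite addn1 /= dvdn_mull // mul1r; apply: bigmax_le => [//|a _].
    by rewrite addr0; apply: w_step.
  rewrite addnS /= dvdn_addr ?dvdn_mull // gtnNdvd //.
  apply: bigmax_le => [|a _]; first by rewrite mulr_ge0.
  rewrite [k.+2%:R]mulrS mulrDl mul1r lerD ?(IH (ltnW kD)) //.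
  by apply: w_step; apply: leq_trans NmD (leq_addr _ _).
by rewrite /Rhat mulSn addnC; have := R_le D.-1; rewrite prednK //; apply.
Qed.

End Protocol.

Section Consensus.
Variables (R : realType) (n' p : nat) (E : rel 'I_n'.+1) (P : 'M[R]_n'.+1).
Variable u0 : 'I_n'.+1 -> 'rV[R]_p.
Hypotheses (P_stoch : column_stochastic P) (P_prim : primitive_mx P).
Hypothesis P_adj : weighted_adjacency E P.
Local Open Scope classical_set_scope.

Lemma pow_mul_ones_cvg : exists l : 'cV[R]_n'.+1, [/\ P *m l = l, forall i, 0 < l i 0 &
  forall i, (P ^+ t *m (const_mx 1 : 'cV_n'.+1)) i 0 @[t --> \oo] --> l i 0].
Proof.
have [l Pl l_cvg] := pow_mul_cvg_fixed_real P_stoch P_prim (const_mx 1).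
have ones_ge0 i : 0 <= (const_mx 1 : 'cV[R]_n'.+1) i 0 by rewrite mxE.
have l_ge0 i : 0 <= l i 0.
  by apply: (cvgr_to_ge (l_cvg i)); apply: nearW => t; apply: pow_mul_ge0 P_stoch.1 ones_ge0 i.
exists l; split=> //; apply: (irreducible_fixed_gt0 P_stoch.1 P_prim.1 Pl l_ge0).
case: (pickP (fun i => 0 < l i 0)) => [i li_gt0|l_le0]; first by exists i.
have : n'.+1%:R <= \sum_i l i 0.
  have sum_cvg : \sum_i (P ^+ t *m (const_mx 1 : 'cV_n'.+1)) i 0 @[t --> \oo] --> \sum_i l i 0.
    by apply: cvg_big => [|i _]; [exact: add_continuous | exact: l_cvg].
  apply: (cvgr_to_ge sum_cvg); apply: nearW => t.
  rewrite sum_pow_mul //; under eq_bigr do rewrite mxE.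
  by rewrite sumr_const card_ord.
rewrite big1 => [|i _]; first by rewrite lern0.
by apply/eqP; rewrite eq_le l_ge0 andbT leNgt l_le0.
Qed.

Lemma w_seq_cvg : exists c : 'I_p -> R,
  forall j k, w_seq E P u0 t j 0 k @[t --> \oo] --> c k.
Proof.
have [l [Pl l_gt0 l_cvg]] := pow_mul_ones_cvg.
have /fin_all_exists [L L_spec] : forall k : 'I_p, exists L : 'cV[R]_n'.+1,
    P *m L = L /\ forall j, (P ^+ t *m \col_i u0 i 0 k) j 0 @[t --> \oo] --> L j 0.
  move=> k; have [L PL L_cvg] := pow_mul_cvg_fixed_real P_stoch P_prim (\col_i u0 i 0 k).
  by exists L.
exists (fun k => L k ord0 0 / l ord0 0) => j k.
rewrite (irreducible_fixed_ratio_const P_stoch.1 P_prim.1 (L_spec k).1 Pl l_gt0 ord0 j).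
under eq_cvg do rewrite w_seqE //.
by apply: cvgM; [exact: (L_spec k).2 | exact: cvgV (lt0r_neq0 (l_gt0 j)) (l_cvg j)].
Qed.

Lemma w_seq_increments_small (eta : R) : 0 < eta ->
  \forall s \near \oo, forall a b, enorm (w_seq E P u0 s.+1 a - w_seq E P u0 s b) <= eta.
Proof.
move=> eta_gt0; have [c w_cvg] := w_seq_cvg.
pose d := eta / p.+1%:R; have d_gt0 : 0 < d by rewrite divr_gt0.
have [N _ w_near] : \forall s \near \oo, forall j k, `|c k - w_seq E P u0 s j 0 k| < d / 2.
  apply: filter_forall => j; apply: filter_forall => k.
  exact: (cvgrPdist_lt _ _).1 (w_cvg j k) _ (divr_gt0 d_gt0 (ltr0Sn _ 1)).
exists N => // s /= Ns a b; apply: le_trans (enorm_le_sum _) _.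
have /= near_s := w_near s Ns; have /= near_s1 := w_near s.+1 (leqW Ns).
apply: (@le_trans _ _ (\sum_(k < p) d)).
  apply: ler_sum => k _; set wa := w_seq _ _ _ _ a; set wb := w_seq _ _ _ _ b.
  have -> : (wa - wb) 0 k = wa 0 k - wb 0 k by rewrite !mxE.
  apply: le_trans (ler_distD (c k) _ _) _; rewrite distrC [d]splitr ltW //.
  by apply: ltrD; [exact: near_s1 | exact: near_s].
rewrite sumr_const card_ord -[X in _ <= X](@divfK _ p.+1%:R) ?pnatr_eq0 // -/d.
by rewrite mulr_natr ler_pMn2l.
Qed.

End Consensus.

Unset Implicit Arguments.
Set Strict Implicit.

Theorem proposition3p1 (R : realType) (n p : nat) (E : rel 'I_n) (D : nat)
    (P : 'M[R]_n) (eps : R) (u0 : 'I_n -> 'rV[R]_p) :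
  strongly_connected E ->
  (0 < D)%N -> diameter_le E D ->
  column_stochastic P -> primitive_mx P -> weighted_adjacency E P ->
  0 < eps ->
  forall i : 'I_n, exists m : nat, (0 < m)%N /\ Rhat E P D u0 m.-1 i < eps.
Proof.
move=> _ D_gt0 _ P_stoch P_prim P_adj eps_gt0 i.
case: n E P u0 P_stoch P_prim P_adj i => [|n'] E P u0 P_stoch P_prim P_adj i; first by case: i.
have D_gt0R : (0 : R) < D%:R by rewrite ltr0n.
pose eta := eps / (2 * D%:R); have eta_gt0 : 0 < eta by rewrite divr_gt0 ?mulr_gt0.
have [N _ w_step] := w_seq_increments_small u0 P_stoch P_prim P_adj eta_gt0.
exists N.+1; split=> //=.
apply: le_lt_trans (Rhat_le _ D_gt0 (ltW eta_gt0) (leq_pmulr _ D_gt0) w_step) _.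
have -> : D%:R * eta = eps / 2 by rewrite /eta; field; rewrite gt_eqF.
by rewrite ltr_pdivrMr // ltr_pMr // ltr1n.
Qed.
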